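(* Let $(M,g)$ be an $n$-dimensional pseudo-Riemannian manifold and $T$ a Killing tensor (respectively, a traceless conformal tensor). Then: (i) if $x,y$ are eigenvectors of $T$ in the eigenspace $E_\rho$ of the eigenvalue function $\rho$, then $$(T-\rho g)\{x,y\}=g(x,y)\,s+g(s,x)\,y+g(s,y)\,x,\qquad s\equiv\mathrm d\rho-t,$$ where $t=0$ (respectively, $t=\frac{2}{n+2}\nabla\cdot T$); (ii) if $x,y,z$ are eigenvectors corresponding to three different eigenvalues, then $T(x,\{y,z\})+T(z,\{x,y\})+T(y,\{z,x\})=0$.
   Context: $\nabla$ is the Levi-Civita connection; vectors and 1-forms are identified via $g$; $T$ is viewed both as a bilinear form and as an endomorphism. $\{x,y\}=\nabla_xy+\nabla_yx$. $(\nabla\cdot T)_b=\nabla^aT_{ab}$. Killing tensor: symmetric $K$ with $\nabla_{(a}K_{bc)}=0$. Conformal tensor: traceless symmetric $T$ with $\nabla_{(a}T_{bc)}=g_{(ab}t_{c)}$ for some 1-form $t$ (necessarily $t=\frac2{n+2}\nabla\cdot T$). Eigenvectors are vector fields $x$ with $T(x)=\rho x$ for the eigenvalue function $\rho$. *)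

(* Local coordinate formalization:
   the manifold is represented by an open coordinate domain U of R^n
   (points are row vectors 'rV[R]_n); all tensors are given by their
   component functions in these coordinates. *)
From HB Require Import structures.
From mathcomp Require Import all_boot all_order all_algebra.
From mathcomp Require Import all_classical all_reals all_analysis.
Set Implicit Arguments. Unset Strict Implicit. Unset Printing Implicit Defensive.
Import Order.TTheory GRing.Theory Num.Theory.
Import numFieldNormedType.Exports.
Local Open Scope classical_set_scope.
Local Open Scope ring_scope.

Section Coords.
Variables (R : realType) (n : nat).

Definition point := 'rV[R]_n.
(* vector fields: component i of X at p is X p 0 i (upper index) *)
Definition vfield := point -> 'rV[R]_n.
(* (0,2)-tensor fields: component T p i j (lower indices) *)
Definition tfield := point -> 'M[R]_n.

Definition partial (f : point -> R) (k : 'I_n) (p : point) : R :=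
  'D_(delta_mx 0 k) f p.

Definition ginv (g : tfield) (p : point) : 'M[R]_n := invmx (g p).

Definition christoffel (g : tfield) (p : point) (i j k : 'I_n) : R :=
  2^-1 * \sum_(l < n) ginv g p i l *
    (partial (fun q => g q l k) j p + partial (fun q => g q l j) k p
     - partial (fun q => g q j k) l p).

Definition cov (g : tfield) (X Y : vfield) (p : point) : 'rV[R]_n :=
  \row_i (\sum_(j < n) X p 0 j * partial (fun q => Y q 0 i) j p
          + \sum_(j < n) \sum_(k < n) christoffel g p i j k * X p 0 j * Y p 0 k).

(* {X,Y} = nabla_X Y + nabla_Y X *)
Definition sbracket (g : tfield) (X Y : vfield) (p : point) : 'rV[R]_n :=
  cov g X Y p + cov g Y X p.

(* (nabla T)_{abc} = nabla_a T_{bc} *)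
Definition nablaT (g T : tfield) (p : point) (a b c : 'I_n) : R :=
  partial (fun q => T q b c) a p
  - \sum_(l < n) (christoffel g p l a b * T p l c + christoffel g p l a c * T p b l).

Definition divT (g T : tfield) (p : point) : 'rV[R]_n :=
  \row_b \sum_(a < n) \sum_(c < n) ginv g p a c * nablaT g T p c a b.

Definition bform (A : 'M[R]_n) (u v : 'rV[R]_n) : R := (u *m A *m v^T) 0 0.

(* T viewed as an endomorphism: T(x)^i = g^{ik} T_{kj} x^j (row-vector form) *)
Definition endo (g T : tfield) (p : point) (x : 'rV[R]_n) : 'rV[R]_n :=
  x *m (T p)^T *m (ginv g p)^T.

Definition pseudo_riemannian (g : tfield) (U : set point) : Prop :=
  forall p, U p -> (g p)^T = g p /\ g p \in unitmx.

Definition diff_fun (f : point -> R) (U : set point) : Prop :=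
  forall p, U p -> differentiable f p.
Definition diff_tfield (T : tfield) (U : set point) : Prop :=
  forall i j, diff_fun (fun q => T q i j) U.
Definition diff_vfield (X : vfield) (U : set point) : Prop :=
  forall i, diff_fun (fun q => X q 0 i) U.

Definition killing_tensor (g T : tfield) (U : set point) : Prop :=
  forall p, U p -> (T p)^T = T p /\
    forall a b c, nablaT g T p a b c + nablaT g T p b c a + nablaT g T p c a b = 0.

Definition conformal_tensor (g T : tfield) (U : set point) : Prop :=
  exists t : point -> 'rV[R]_n,
  forall p, U p -> (T p)^T = T p /\
    \sum_(a < n) \sum_(b < n) ginv g p a b * T p a b = 0 /\
    forall a b c, nablaT g T p a b c + nablaT g T p b c a + nablaT g T p c a b
                  = g p a b * t p 0 c + g p b c * t p 0 a + g p c a * t p 0 b.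

Definition eigvec (g T : tfield) (rho : point -> R) (x : vfield) (U : set point)
  : Prop := forall p, U p -> endo g T p (x p) = rho p *: x p.

Definition drho (rho : point -> R) (p : point) : 'rV[R]_n :=
  \row_k partial rho k p.

End Coords.

(* Differentiating the eigen-equation x (T - rho g) = 0 covariantly along u gives
   (T - rho g)(nabla_u x, v) + (nabla_u T)(x, v) = d rho(u) g(x, v).  At a point
   this is linear algebra: nabla T is symmetric in its last two slots and its
   cyclic sum is g_(ab t_c), so symmetrising the identity in x and y eliminates
   nabla T and gives (i).  For three distinct eigenvalues the eigenvectors are
   g-orthogonal, the identity expresses (nabla_u T)(x_i, x_j) through
   g(x_j, nabla_u x_i), and the cyclic sum of nabla T on x, y, z vanishes, which
   gives (ii).  In the conformal case the 1-form t of the definition is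
   identified with 2/(n+2) nabla.T by contracting the cyclic identity with
   g^{-1}, nabla T being trace-free because nabla g = 0. *)
From HB Require Import structures.
From mathcomp Require Import all_boot all_order all_algebra.
From mathcomp Require Import all_classical all_reals all_analysis.
From mathcomp Require Import ring lra.
Set Implicit Arguments. Unset Strict Implicit. Unset Printing Implicit Defensive.
Import Order.TTheory GRing.Theory Num.Theory.
Import numFieldNormedType.Exports.
Local Open Scope classical_set_scope.
Local Open Scope ring_scope.

Section Derivability.
Variables (R : realType) (V : normedModType R).
Implicit Types (p v : V).

Lemma derivable_big_sum (I : Type) (r : seq I) (P : pred I) (F : I -> V -> R) p v :
  (forall i, P i -> derivable (F i) p v) ->
  derivable (fun q => \sum_(i <- r | P i) F i q) p v.
Proof.
move=> dF; rewrite -fct_sumE.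
apply: (big_ind (fun f : V -> R => derivable f p v)) => //.
by move=> f h; exact: derivableD.
Qed.

Lemma derivable_big_prod (I : Type) (r : seq I) (P : pred I) (F : I -> V -> R) p v :
  (forall i, P i -> derivable (F i) p v) ->
  derivable (fun q => \prod_(i <- r | P i) F i q) p v.
Proof.
move=> dF; rewrite -fct_prodE.
apply: (big_ind (fun f : V -> R => derivable f p v)) => //.
by move=> f h; exact: derivableM.
Qed.

Lemma derivable_det m (M : V -> 'M[R]_m) p v :
  (forall i j, derivable (fun q => M q i j) p v) ->
  derivable (fun q => \det (M q)) p v.
Proof.
move=> dM; apply: derivable_big_sum => s _.
apply: (derivableM (derivable_cst _ _ _)).
by apply: derivable_big_prod => i _; exact: dM.
Qed.

Lemma derivable_invmx m (M : V -> 'M[R]_m) p v i j :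
  (\forall q \near p, M q \in unitmx) ->
  (forall i j, derivable (fun q => M q i j) p v) ->
  derivable (fun q => invmx (M q) i j) p v.
Proof.
move=> Mu dM; have Mpu : M p \in unitmx by exact: nbhs_singleton Mu.
have dadj : derivable (fun q => \adj (M q) i j) p v.
  have -> : (fun q => \adj (M q) i j) =
      (fun q => (-1) ^+ (j + i) * \det (row' j (col' i (M q)))).
    by apply: funext => q; rewrite mxE.
  apply: (derivableM (derivable_cst _ _ _)); apply: derivable_det => a b.
  have -> : (fun q => row' j (col' i (M q)) a b) = (fun q => M q (lift j a) (lift i b)).
    by apply: funext => q; rewrite !mxE.
  exact: dM.
have dinv : derivable (fun q => (\det (M q))^-1 * \adj (M q) i j) p v.
  apply: derivableM dadj; apply: derivableV; last exact: derivable_det.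
  by rewrite -unitfE -unitmxE.
apply: near_eq_derivable dinv; near=> q.
have Mq : M q \in unitmx by near: q.
by rewrite /invmx Mq [RHS]mxE.
Unshelve. all: by end_near.
Qed.

End Derivability.

Notation pderivable f k p := (derivable f p (delta_mx 0 k)).

Section MatrixCalculus.
Variables (R : realType) (n : nat).
Local Notation point := 'rV[R]_n.
Implicit Types (U : set point) (f h : point -> R) (p : point) (k : 'I_n).

Lemma partial_eq_on U f h k p : open U -> U p ->
  (forall q, U q -> f q = h q) -> partial f k p = partial h k p.
Proof.
move=> oU Up fh; apply: near_eq_derive; near=> q; apply: fh.
by near: q; exact: open_nbhs_nbhs.
Unshelve. all: by end_near.
Qed.

Lemma partial_cst_on U f c k p : open U -> U p ->
  (forall q, U q -> f q = c) -> partial f k p = 0.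
Proof.
move=> oU Up fc; rewrite (partial_eq_on (h := cst c) k oU Up fc).
exact: derive_cst.
Qed.

Definition dmx a b (F : point -> 'M[R]_(a, b)) k p : 'M[R]_(a, b) :=
  \matrix_(i, j) partial (fun q => F q i j) k p.

Definition mx_pderivable a b (F : point -> 'M[R]_(a, b)) k p : Prop :=
  forall i j, pderivable (fun q => F q i j) k p.

Section MatrixFields.
Variables (a b : nat).
Implicit Types (F H : point -> 'M[R]_(a, b)).

Lemma dmx_eq_on U F H k p : open U -> U p ->
  (forall q, U q -> F q = H q) -> dmx F k p = dmx H k p.
Proof.
move=> oU Up FH; apply/matrixP => i j; rewrite !mxE.
by apply: (partial_eq_on k oU Up) => q Uq; rewrite FH.
Qed.

Lemma dmx_cst_on U F C k p : open U -> U p ->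
  (forall q, U q -> F q = C) -> dmx F k p = 0.
Proof.
move=> oU Up FC; apply/matrixP => i j; rewrite !mxE.
by apply: (partial_cst_on k oU Up) => q Uq; rewrite FC.
Qed.

Lemma dmx_tr F k p : dmx (fun q => (F q)^T) k p = (dmx F k p)^T.
Proof.
apply/matrixP => i j; rewrite !mxE.
by congr partial; apply: funext => q; rewrite mxE.
Qed.

Lemma dmxZ f F k p : pderivable f k p -> mx_pderivable F k p ->
  dmx (fun q => f q *: F q) k p = partial f k p *: F p + f p *: dmx F k p.
Proof.
move=> df dF; apply/matrixP => i j; rewrite !mxE.
under eq_fun do rewrite mxE.
by rewrite /partial deriveM //= addrC [_ * F p i j]mulrC.
Qed.

Lemma partial_mxtrace (F : point -> 'M[R]_a) k p : mx_pderivable F k p ->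
  partial (fun q => \tr (F q)) k p = \tr (dmx F k p).
Proof.
move=> dF; rewrite /partial.
have -> : (fun q => \tr (F q)) = \sum_i (fun q => F q i i) by rewrite fct_sumE.
by rewrite derive_sum //; apply: eq_bigr => i _; rewrite mxE.
Qed.

End MatrixFields.

Lemma mx_pderivableM a b c (F : point -> 'M[R]_(a, b)) (H : point -> 'M[R]_(b, c)) k p :
  mx_pderivable F k p -> mx_pderivable H k p ->
  mx_pderivable (fun q => F q *m H q) k p.
Proof.
move=> dF dH i j; under eq_fun do rewrite mxE.
by apply: derivable_big_sum => l _; exact: derivableM.
Qed.

Lemma dmxM a b c (F : point -> 'M[R]_(a, b)) (H : point -> 'M[R]_(b, c)) k p :
  mx_pderivable F k p -> mx_pderivable H k p ->
  dmx (fun q => F q *m H q) k p = dmx F k p *m H p + F p *m dmx H k p.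
Proof.
move=> dF dH; apply/matrixP => i j; rewrite !mxE /partial.
have -> : (fun q => (F q *m H q) i j) = \sum_l (fun q => F q i l * H q l j).
  by rewrite fct_sumE; apply: funext => q; rewrite mxE.
rewrite derive_sum => [|l]; last exact: derivableM.
rewrite -big_split; apply: eq_bigr => l _ /=.
by rewrite deriveM // !mxE addrC [_ * H p l j]mulrC.
Qed.

Lemma diff_fun_pderivable U f k p : diff_fun f U -> U p -> pderivable f k p.
Proof. by move=> df Up; apply: diff_derivable; exact: df. Qed.

Lemma diff_tfield_pderivable U (T : tfield R n) k p :
  diff_tfield T U -> U p -> mx_pderivable T k p.
Proof. by move=> dT Up i j; exact: diff_fun_pderivable (dT i j) Up. Qed.

Lemma diff_vfield_pderivable U (X : vfield R n) k p :
  diff_vfield X U -> U p -> mx_pderivable X k p.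
Proof. by move=> dX Up i j; rewrite ord1; exact: diff_fun_pderivable (dX j) Up. Qed.

End MatrixCalculus.

Section Connection.
Variables (R : realType) (n : nat).
Local Notation point := 'rV[R]_n.
Implicit Types (U : set point) (g T : tfield R n) (u p : point) (k : 'I_n).

Definition dirmx a b (F : point -> 'M[R]_(a, b)) u p : 'M[R]_(a, b) :=
  \sum_k u 0 k *: dmx F k p.

Definition Gamma_mx g k p : 'M[R]_n := \matrix_(b, l) christoffel g p l k b.

Definition Gamma_dir g u p : 'M[R]_n := \sum_k u 0 k *: Gamma_mx g k p.

Definition covD g (X : vfield R n) u p : 'rV[R]_n :=
  dirmx X u p + X p *m Gamma_dir g u p.

Definition nablaT_mx g T k p : 'M[R]_n := \matrix_(b, c) nablaT g T p k b c.

Definition nablaT_dir g T u p : 'M[R]_n := \sum_k u 0 k *: nablaT_mx g T k p.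

Lemma cov_covD g (X Y : vfield R n) p : cov g X Y p = covD g Y (X p) p.
Proof.
apply/rowP => i; rewrite !mxE summxE; congr (_ + _).
  by apply: eq_bigr => j _; rewrite !mxE.
under [RHS]eq_bigr do rewrite summxE big_distrr /=.
rewrite [RHS]exchange_big /=; apply: eq_bigr => j _; apply: eq_bigr => k _.
by rewrite !mxE; ring.
Qed.

Lemma nablaT_mxE g T k p :
  nablaT_mx g T k p = dmx T k p - Gamma_mx g k p *m T p - T p *m (Gamma_mx g k p)^T.
Proof.
apply/matrixP => b c; rewrite !mxE /nablaT big_split /= opprD addrA.
congr (_ - _ - _); apply: eq_bigr => l _; rewrite !mxE //.
exact: mulrC.
Qed.

Lemma nablaT_dirE g T u p :
  nablaT_dir g T u p
  = dirmx T u p - Gamma_dir g u p *m T p - T p *m (Gamma_dir g u p)^T.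
Proof.
rewrite /nablaT_dir /dirmx /Gamma_dir mulmx_suml [X in T p *m X]linear_sum.
rewrite mulmx_sumr -!sumrB.
apply: eq_bigr => k _; rewrite nablaT_mxE linearZ /= -scalemxAl -scalemxAr.
by rewrite !scalerBr.
Qed.

Lemma ginv_sym g p : (g p)^T = g p -> (ginv g p)^T = ginv g p.
Proof. by move=> gs; rewrite /ginv trmx_inv gs. Qed.

Lemma metric_compatible_mx g k p : (g p)^T = g p -> g p \in unitmx ->
  (forall j, (dmx g j p)^T = dmx g j p) ->
  dmx g k p = Gamma_mx g k p *m g p + g p *m (Gamma_mx g k p)^T.
Proof.
move=> gs gu dgs.
have dg j a b : partial (fun q => g q a b) j p = partial (fun q => g q b a) j p.
  by have /matrixP/(_ b a) := dgs j; rewrite !mxE.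
set P : 'M[R]_n := \matrix_(m, b) (partial (fun q => g q m b) k p
   + partial (fun q => g q m k) b p - partial (fun q => g q k b) m p).
have -> : Gamma_mx g k p = 2^-1 *: (ginv g p *m P)^T.
  apply/matrixP => b l; rewrite !mxE /christoffel; congr (_ * _).
  by apply: eq_bigr => m _; rewrite !mxE.
rewrite -scalemxAl trmx_mul (ginv_sym gs) -mulmxA mulVmx // mulmx1.
rewrite linearZ /= trmx_mul trmxK (ginv_sym gs) -scalemxAr mulmxA mulmxV //.
rewrite mul1mx; apply/matrixP => b c; rewrite !mxE (dg k c b) (dg b c k) (dg c k b).
by field.
Qed.

Lemma metric_compatible_dir g u p : (g p)^T = g p -> g p \in unitmx ->
  (forall j, (dmx g j p)^T = dmx g j p) ->
  dirmx g u p = Gamma_dir g u p *m g p + g p *m (Gamma_dir g u p)^T.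
Proof.
move=> gs gu dgs; rewrite /dirmx /Gamma_dir [X in g p *m X]linear_sum.
rewrite mulmx_suml mulmx_sumr.
rewrite -big_split; apply: eq_bigr => k _ /=.
rewrite (metric_compatible_mx k gs gu dgs) linearZ /= scalerDr.
by rewrite -scalemxAl -scalemxAr.
Qed.

Lemma dmx_sym_on U (F : point -> 'M[R]_n) k p : open U -> U p ->
  (forall q, U q -> (F q)^T = F q) -> (dmx F k p)^T = dmx F k p.
Proof. by move=> oU Up Fs; rewrite -dmx_tr; exact: (dmx_eq_on k oU Up Fs). Qed.

Lemma ginv_pderivable U g k p : open U -> pseudo_riemannian g U ->
  diff_tfield g U -> U p -> mx_pderivable (ginv g) k p.
Proof.
move=> oU gU dg Up i j; apply: derivable_invmx; last first.
  by move=> a b; exact: diff_fun_pderivable (dg a b) Up.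
near=> q; have Uq : U q by near: q; exact: open_nbhs_nbhs.
exact: (gU q Uq).2.
Unshelve. all: by end_near.
Qed.

Lemma dmx_ginv U g k p : open U -> pseudo_riemannian g U -> diff_tfield g U -> U p ->
  dmx (ginv g) k p = - (ginv g p *m dmx g k p *m ginv g p).
Proof.
move=> oU gU dg Up; have [gs gu] := gU p Up.
have dgp := diff_tfield_pderivable (k := k) dg Up.
have dgi := ginv_pderivable (k := k) oU gU dg Up.
have : dmx (fun q => g q *m ginv g q) k p = 0.
  apply: (dmx_cst_on (C := 1%:M) k oU Up) => q Uq.
  by rewrite mulmxV //; case: (gU q Uq).
rewrite dmxM // => /eqP; rewrite addrC addr_eq0 => /eqP /(congr1 (mulmx (ginv g p))).
by rewrite mulmxA mulVmx // mul1mx mulmxN mulmxA.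
Qed.

End Connection.

Section Dot.
Variables (R : comPzRingType) (n : nat).
Local Notation vec := 'rV[R]_n.
Implicit Types (u v w : vec).

Definition dot u v : R := (u *m v^T) 0 0.

Lemma dotDl u v w : dot (u + v) w = dot u w + dot v w.
Proof. by rewrite /dot mulmxDl mxE. Qed.

Lemma dotNl u w : dot (- u) w = - dot u w.
Proof. by rewrite /dot mulNmx mxE. Qed.

Lemma dotBl u v w : dot (u - v) w = dot u w - dot v w.
Proof. by rewrite dotDl dotNl. Qed.

Lemma dotZl a u w : dot (a *: u) w = a * dot u w.
Proof. by rewrite /dot -scalemxAl mxE. Qed.

Lemma dot0l w : dot 0 w = 0.
Proof. by rewrite /dot mul0mx mxE. Qed.

Lemma dotDr u v w : dot u (v + w) = dot u v + dot u w.
Proof. by rewrite /dot linearD /= mulmxDr mxE. Qed.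

Lemma dot_suml m (F : 'I_m -> vec) w : dot (\sum_i F i) w = \sum_i dot (F i) w.
Proof. by rewrite /dot mulmx_suml summxE. Qed.

Lemma dot_delta u c : dot u (delta_mx 0 c) = u 0 c.
Proof. by rewrite /dot trmx_delta -colE mxE. Qed.

Lemma dotI u v : (forall w, dot u w = dot v w) -> u = v.
Proof. by move=> uv; apply/rowP => c; rewrite -!dot_delta uv. Qed.

Lemma dot_mul_sym (A : 'M[R]_n) u v : A^T = A -> dot (u *m A) v = dot (v *m A) u.
Proof.
move=> As; rewrite /dot.
have -> : (u *m A *m v^T) 0 0 = (u *m A *m v^T)^T 0 0 by rewrite [RHS]mxE.
by rewrite !trmx_mul trmxK As mulmxA.
Qed.

End Dot.

Lemma bformE (R : realType) n (A : 'M[R]_n) (u v : 'rV[R]_n) :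
  bform A u v = dot (u *m A) v.
Proof. by []. Qed.

Section EigenAlgebra.
Variables (R : realFieldType) (n : nat).
Local Notation vec := 'rV[R]_n.
Variables (G T : 'M[R]_n) (N : vec -> vec -> vec -> R) (t : vec).
Hypotheses (Gs : G^T = G) (Ts : T^T = T).
Hypothesis N_sym : forall u v w, N u v w = N u w v.
Hypothesis N_cyclic : forall u v w, N u v w + N v w u + N w u v
  = dot (u *m G) v * dot t w + dot (v *m G) w * dot t u + dot (w *m G) u * dot t v.

(* [C u] and [dr u] play the roles of nabla_u x and d rho(u): the second
   clause is the covariant derivative of the eigen equation x (T - rho G) = 0. *)
Definition eigen_jet (x : vec) (r : R) (C : vec -> vec) (dr : vec -> R) : Prop :=
  x *m (T - r *: G) = 0 /\
  forall u v, dot (C u *m (T - r *: G)) v + N u x v = dr u * dot (x *m G) v.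

Lemma eigen_mulT (x : vec) r : x *m (T - r *: G) = 0 -> x *m T = r *: (x *m G).
Proof. by move=> xr; apply/eqP; rewrite -subr_eq0 scalemxAr -mulmxBr xr. Qed.

Lemma shifted_sym r : (T - r *: G)^T = T - r *: G.
Proof. by rewrite linearB linearZ /= Gs Ts. Qed.

Lemma dot_shifted_eigen (x w : vec) r s : x *m (T - r *: G) = 0 ->
  dot (w *m (T - s *: G)) x = (r - s) * dot (x *m G) w.
Proof.
move=> xr; rewrite dot_mul_sym ?shifted_sym // mulmxBr (eigen_mulT xr).
by rewrite -scalemxAr dotBl !dotZl mulrBl.
Qed.

Lemma eigen_orthogonal (x y : vec) r s : r != s ->
  x *m (T - r *: G) = 0 -> y *m (T - s *: G) = 0 -> dot (x *m G) y = 0.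
Proof.
move=> rs xr ys; have := dot_shifted_eigen x r ys.
rewrite xr dot0l (dot_mul_sym y x Gs) => /esym /eqP.
by rewrite mulf_eq0 subr_eq0 eq_sym (negbTE rs) => /eqP.
Qed.

Lemma eigen_jet_bracket (x y : vec) r Cx Cy dr w :
  eigen_jet x r Cx dr -> eigen_jet y r Cy dr ->
  dot ((Cx y + Cy x) *m (T - r *: G)) w
  = dot (x *m G) y * (dr w - dot t w) + (dr x - dot t x) * dot (y *m G) w
    + (dr y - dot t y) * dot (x *m G) w.
Proof.
move=> [xr Jx] [yr Jy].
have Jyxw := Jy x w; have Jxyw := Jx y w; have Jywx := Jy w x.
have Nyxw := N_sym y x w; have Nwxy := N_sym w x y.
have cyc := N_cyclic x y w; rewrite (dot_mul_sym w x Gs) in cyc.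
have Cyw_x : dot (Cy w *m (T - r *: G)) x = 0.
  by rewrite (dot_shifted_eigen _ r xr) subrr mul0r.
rewrite (dot_mul_sym y x Gs) in Jywx.
rewrite mulmxDl dotDl; lra.
Qed.

Lemma eigen_jet_cross (x y : vec) r s Cx dx u : r != s ->
  eigen_jet x r Cx dx -> y *m (T - s *: G) = 0 ->
  N u x y = (r - s) * dot (y *m G) (Cx u).
Proof.
move=> rs [xr Jx] ys; have := Jx u y.
rewrite (dot_shifted_eigen _ r ys) (eigen_orthogonal rs xr ys) mulr0.
by move/eqP; rewrite addrC addr_eq0 => /eqP ->; rewrite -mulNr opprB.
Qed.

Lemma eigen_jet_distinct (x y z : vec) r1 r2 r3 Cx Cy Cz d1 d2 d3 :
  r1 != r2 -> r2 != r3 -> r1 != r3 ->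
  eigen_jet x r1 Cx d1 -> eigen_jet y r2 Cy d2 -> eigen_jet z r3 Cz d3 ->
  dot (x *m T) (Cz y + Cy z) + dot (z *m T) (Cy x + Cx y)
  + dot (y *m T) (Cx z + Cz x) = 0.
Proof.
move=> r12 r23 r13 Jx Jy Jz.
have [[xr _] [yr _] [zr _]] := And3 Jx Jy Jz.
have antisym (a b X Y : R) : a != b -> (a - b) * X = (b - a) * Y -> Y = - X.
  move=> ab E; have : (a - b) * (Y + X) = 0 by rewrite mulrDr E; ring.
  by move/eqP; rewrite mulf_eq0 subr_eq0 (negbTE ab) addr_eq0 => /eqP.
have r21 : r2 != r1 by rewrite eq_sym.
have r31 : r3 != r1 by rewrite eq_sym.
have r32 : r3 != r2 by rewrite eq_sym.
have Nzxy := eigen_jet_cross z r12 Jx yr.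
have Nzyx := eigen_jet_cross z r21 Jy xr.
have Nyxz := eigen_jet_cross y r13 Jx zr.
have Nyzx := eigen_jet_cross y r31 Jz xr.
have Nxyz := eigen_jet_cross x r23 Jy zr.
have Nxzy := eigen_jet_cross x r32 Jz yr.
rewrite (eigen_mulT xr) (eigen_mulT yr) (eigen_mulT zr) !dotZl !dotDr.
have -> : dot (x *m G) (Cy z) = - dot (y *m G) (Cx z).
  by apply: antisym r12 _; rewrite -Nzxy -Nzyx N_sym.
have -> : dot (x *m G) (Cz y) = - dot (z *m G) (Cx y).
  by apply: antisym r13 _; rewrite -Nyxz -Nyzx N_sym.
have -> : dot (y *m G) (Cz x) = - dot (z *m G) (Cy x).
  by apply: antisym r23 _; rewrite -Nxyz -Nxzy N_sym.
have := N_cyclic x y z.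
rewrite (eigen_orthogonal r12 xr yr) (eigen_orthogonal r23 yr zr).
rewrite dot_mul_sym // (eigen_orthogonal r13 xr zr) !mul0r !addr0.
rewrite -[N y z x]N_sym Nxyz Nyxz Nzxy; lra.
Qed.

End EigenAlgebra.

Section Trilinear.
Variables (R : comPzRingType) (n : nat).
Local Notation vec := 'rV[R]_n.
Implicit Types (N : 'I_n -> 'I_n -> 'I_n -> R) (u v w : vec).

Definition trilin N u v w : R :=
  \sum_a \sum_b \sum_c u 0 a * v 0 b * w 0 c * N a b c.

Lemma eq_trilin N N' u v w :
  (forall a b c, N a b c = N' a b c) -> trilin N u v w = trilin N' u v w.
Proof.
move=> NN; apply: eq_bigr => a _; apply: eq_bigr => b _; apply: eq_bigr => c _.
by rewrite NN.
Qed.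

Lemma trilinD N N' u v w :
  trilin (fun a b c => N a b c + N' a b c) u v w = trilin N u v w + trilin N' u v w.
Proof.
rewrite /trilin -big_split; apply: eq_bigr => a _; rewrite -big_split.
by apply: eq_bigr => b _; rewrite -big_split; apply: eq_bigr => c _ /=; ring.
Qed.

Lemma trilin_rot N u v w : trilin (fun a b c => N b c a) u v w = trilin N v w u.
Proof.
rewrite /trilin exchange_big /=; apply: eq_bigr => b _; rewrite exchange_big /=.
by apply: eq_bigr => c _; apply: eq_bigr => a _; ring.
Qed.

Lemma trilin_cyclic N u v w :
  trilin (fun a b c => N a b c + N b c a + N c a b) u v w
  = trilin N u v w + trilin N v w u + trilin N w u v.
Proof.
have rot2 : trilin (fun a b c => N c a b) u v w = trilin N w u v.
  by rewrite -(trilin_rot N v w u) -(trilin_rot (fun a b c => N b c a) u v w).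
by rewrite !trilinD rot2 (trilin_rot N u v w).
Qed.

Lemma trilin_outer (G : 'M[R]_n) (t : vec) u v w :
  trilin (fun a b c => G a b * t 0 c) u v w = dot (u *m G) v * dot t w.
Proof.
have -> : dot t w = \sum_c t 0 c * w 0 c.
  by rewrite /dot mxE; apply: eq_bigr => c _; rewrite mxE.
have -> : dot (u *m G) v = \sum_a \sum_b u 0 a * G a b * v 0 b.
  rewrite /dot mxE [RHS]exchange_big; apply: eq_bigr => b _.
  by rewrite !mxE big_distrl.
rewrite big_distrl; apply: eq_bigr => a _; rewrite big_distrl.
by apply: eq_bigr => b _; rewrite big_distrr; apply: eq_bigr => c _ /=; ring.
Qed.

End Trilinear.

Section NablaT.
Variables (R : realType) (n : nat).
Local Notation point := 'rV[R]_n.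
Implicit Types (U : set point) (g T : tfield R n) (u v w p : point).

Lemma bform_nablaT_dir g T p u v w :
  bform (nablaT_dir g T u p) v w = trilin (nablaT g T p) u v w.
Proof.
rewrite bformE /nablaT_dir mulmx_sumr dot_suml; apply: eq_bigr => a _.
rewrite -scalemxAr dotZl /dot mxE big_distrr [RHS]exchange_big.
apply: eq_bigr => c _; rewrite !mxE big_distrl big_distrr.
by apply: eq_bigr => b _; rewrite !mxE /=; ring.
Qed.

Lemma nablaT_dir_cyclic g T (t : point) p :
  (forall a b c, nablaT g T p a b c + nablaT g T p b c a + nablaT g T p c a b
     = g p a b * t 0 c + g p b c * t 0 a + g p c a * t 0 b) ->
  forall u v w,
  bform (nablaT_dir g T u p) v w + bform (nablaT_dir g T v p) w u
    + bform (nablaT_dir g T w p) u v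
  = dot (u *m g p) v * dot t w + dot (v *m g p) w * dot t u
    + dot (w *m g p) u * dot t v.
Proof.
move=> cyc u v w; rewrite !bform_nablaT_dir -trilin_cyclic (eq_trilin _ _ _ cyc).
by rewrite (trilin_cyclic (fun a b c => g p a b * t 0 c)) !trilin_outer.
Qed.

Lemma nablaT_mx_sym U g T k p : open U -> U p ->
  (forall q, U q -> (T q)^T = T q) -> (nablaT_mx g T k p)^T = nablaT_mx g T k p.
Proof.
move=> oU Up Ts; rewrite nablaT_mxE !linearB /= !trmx_mul !trmxK.
by rewrite (Ts p Up) (dmx_sym_on k oU Up Ts) addrAC.
Qed.

Lemma nablaT_dir_sym U g T u p : open U -> U p ->
  (forall q, U q -> (T q)^T = T q) -> (nablaT_dir g T u p)^T = nablaT_dir g T u p.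
Proof.
move=> oU Up Ts; rewrite linear_sum; apply: eq_bigr => k _.
by rewrite linearZ /= (nablaT_mx_sym g k oU Up Ts).
Qed.

End NablaT.

Section Eigenvector.
Variables (R : realType) (n : nat) (U : set 'rV[R]_n) (g T : tfield R n).
Variables (rho : 'rV[R]_n -> R) (x : vfield R n).
Hypotheses (oU : open U) (gU : pseudo_riemannian g U).
Hypothesis Ts : forall q, U q -> (T q)^T = T q.
Hypotheses (dg : diff_tfield g U) (dT : diff_tfield T U).
Hypotheses (drho_ : diff_fun rho U) (dx : diff_vfield x U).
Hypothesis xE : eigvec g T rho x U.

Lemma eigvec_row q : U q -> x q *m (T q - rho q *: g q) = 0.
Proof.
move=> Uq; have [gs gu] := gU Uq.
have := congr1 (mulmx^~ (g q)) (xE Uq); rewrite /endo -mulmxA (ginv_sym gs).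
by rewrite mulVmx // mulmx1 Ts // -scalemxAl mulmxBr scalemxAr => ->; rewrite subrr.
Qed.

Lemma eigvec_dmx k p : U p ->
  dmx x k p *m T p + x p *m dmx T k p
  = partial rho k p *: (x p *m g p) + rho p *: (dmx x k p *m g p + x p *m dmx g k p).
Proof.
move=> Up.
have dxp := diff_vfield_pderivable (k := k) dx Up.
have dgp := diff_tfield_pderivable (k := k) dg Up.
have dTp := diff_tfield_pderivable (k := k) dT Up.
have drp := diff_fun_pderivable (k := k) drho_ Up.
have := dmx_eq_on k oU Up (fun q Uq => eigen_mulT (eigvec_row Uq)).
rewrite dmxM // dmxZ //; last exact: mx_pderivableM.
by rewrite dmxM.
Qed.

Lemma dot_drho p u : dot (drho rho p) u = \sum_k u 0 k * partial rho k p.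
Proof. by rewrite /dot mxE; apply: eq_bigr => k _; rewrite !mxE mulrC. Qed.

Lemma eigvec_dirmx u p : U p ->
  dirmx x u p *m T p + x p *m dirmx T u p
  = dot (drho rho p) u *: (x p *m g p)
    + rho p *: (dirmx x u p *m g p + x p *m dirmx g u p).
Proof.
move=> Up; rewrite /dirmx dot_drho scaler_suml !mulmx_suml !mulmx_sumr.
rewrite -!big_split scaler_sumr -big_split /=; apply: eq_bigr => k _.
rewrite -!scalemxAl -!scalemxAr -!scalerDr (eigvec_dmx k Up).
by rewrite [LHS]scalerDr !scalerA (mulrC (u 0 k) (rho p)).
Qed.

Lemma eigvec_jet p : U p ->
  eigen_jet (g p) (T p) (fun u v w => bform (nablaT_dir g T u p) v w)
    (x p) (rho p) (fun u => covD g x u p) (dot (drho rho p)).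
Proof.
move=> Up; split=> [|u v]; first exact: eigvec_row.
have [gs gu] := gU Up.
have dgs j : (dmx g j p)^T = dmx g j p.
  by apply: (dmx_sym_on j oU Up) => q Uq; case: (gU Uq).
have := eigvec_dirmx u Up; rewrite (metric_compatible_dir u gs gu dgs).
move=> /(congr1 (fun M => dot M v)); rewrite bformE nablaT_dirE /covD.
rewrite !(mulmxDl, mulmxDr, mulmxN, mulNmx, scalerDr, mulmxA).
rewrite (eigen_mulT (eigvec_row Up)) -!scalemxAl -!scalemxAr.
rewrite !(dotDl, dotNl, dotZl); lra.
Qed.

End Eigenvector.

Section Conformal.
Variables (R : realType) (n : nat) (U : set 'rV[R]_n) (g T : tfield R n).
Hypotheses (oU : open U) (gU : pseudo_riemannian g U).
Hypotheses (dg : diff_tfield g U) (dT : diff_tfield T U).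
Hypothesis Ts : forall q, U q -> (T q)^T = T q.
Hypothesis T_traceless :
  forall q, U q -> \sum_(a < n) \sum_(b < n) ginv g q a b * T q a b = 0.

Lemma sum_mul_entries (X Y : 'M[R]_n) :
  \sum_a \sum_b X a b * Y a b = \tr (X *m Y^T).
Proof.
apply: eq_bigr => a _; rewrite mxE.
by apply: eq_bigr => b _; rewrite !mxE.
Qed.

Lemma nablaT_traceless k p : U p -> \tr (ginv g p *m nablaT_mx g T k p) = 0.
Proof.
move=> Up; have [gs gu] := gU Up.
have dgi := ginv_pderivable (k := k) oU gU dg Up.
have dTp := diff_tfield_pderivable (k := k) dT Up.
have : partial (fun q => \tr (ginv g q *m T q)) k p = 0.
  apply: (partial_cst_on k oU Up) => q Uq.
  by rewrite -(Ts Uq) -sum_mul_entries T_traceless.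
rewrite partial_mxtrace; last exact: mx_pderivableM.
rewrite dmxM // (dmx_ginv k oU gU dg Up) nablaT_mxE.
have dgs j : (dmx g j p)^T = dmx g j p.
  by apply: (dmx_sym_on j oU Up) => q Uq; case: (gU Uq).
rewrite (metric_compatible_mx k gs gu dgs).
set Gi := ginv g p; set Ga := Gamma_mx g k p.
have -> : Gi *m (Ga *m g p + g p *m Ga^T) *m Gi = Gi *m Ga + Ga^T *m Gi.
  by rewrite mulmxDr mulmxDl -!mulmxA mulmxV // mulmx1 !mulmxA mulVmx // mul1mx.
rewrite !(mulmxDl, mulmxDr, mulmxN, mulNmx, mulmxBr, mulmxA).
rewrite !(mxtraceD, raddfN) /= !mxtraceD.
by rewrite -[Ga^T *m Gi *m T p]mulmxA (mxtrace_mulC Ga^T); lra.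
Qed.

Lemma conformal_oneform (t : 'rV[R]_n) p : U p ->
  (forall a b c, nablaT g T p a b c + nablaT g T p b c a + nablaT g T p c a b
     = g p a b * t 0 c + g p b c * t 0 a + g p c a * t 0 b) ->
  t = (2 / (n + 2)%:R) *: divT g T p.
Proof.
move=> Up cyc; have [gs gu] := gU Up.
set N := nablaT g T p; set Gi := ginv g p; set G := g p.
have GiT : Gi^T = Gi := ginv_sym gs.
have GiG : Gi *m G = 1%:M by exact: mulVmx.
have Gs : G^T = G := gs.
have Gsym a b : G a b = G b a by rewrite -[in LHS]Gs mxE.
have Gisym a b : Gi a b = Gi b a by rewrite -[in LHS]GiT mxE.
have Ns a b c : N a b c = N a c b.
  by have /matrixP/(_ c b) := nablaT_mx_sym g a oU Up Ts; rewrite !mxE.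
apply/rowP => c; rewrite !mxE; set dc := \sum_a \sum_b Gi a b * N b a c.
pose contract F := \sum_a \sum_b Gi a b * F a b.
have contract3 F1 F2 F3 : contract (fun a b => F1 a b + F2 a b + F3 a b)
    = contract F1 + contract F2 + contract F3.
  rewrite /contract -!big_split; apply: eq_bigr => a _; rewrite -!big_split.
  by apply: eq_bigr => b _ /=; ring.
have := congr1 contract (funext (fun a => funext (fun b => cyc a b c))).
rewrite !contract3.
have -> : contract (fun a b => N a b c) = dc.
  rewrite /contract exchange_big; apply: eq_bigr => a _; apply: eq_bigr => b _ /=.
  by rewrite Gisym.
have -> : contract (fun a b => N b c a) = dc.
  by apply: eq_bigr => a _; apply: eq_bigr => b _; rewrite Ns.
have -> : contract (fun a b => N c a b) = 0.
  rewrite -(nablaT_traceless c Up) -(nablaT_mx_sym g c oU Up Ts) -sum_mul_entries.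
  by apply: eq_bigr => a _; apply: eq_bigr => b _; rewrite mxE.
have -> : contract (fun a b => G a b * t 0 c) = n%:R * t 0 c.
  have trGiG : \tr (Gi *m G^T) = n%:R by rewrite Gs GiG mxtrace1.
  rewrite -trGiG -sum_mul_entries /contract mulr_suml.
  by apply: eq_bigr => a _; rewrite mulr_suml; apply: eq_bigr => b _; rewrite mulrA.
have tGiG : (t *m Gi *m G) 0 c = t 0 c by rewrite -mulmxA GiG mulmx1.
have -> : contract (fun a b => G b c * t 0 a) = t 0 c.
  rewrite -tGiG mxE /contract exchange_big; apply: eq_bigr => b _.
  by rewrite !mxE mulr_suml; apply: eq_bigr => a _ /=; ring.
have -> : contract (fun a b => G c a * t 0 b) = t 0 c.
  rewrite -tGiG mxE /contract; apply: eq_bigr => a _.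
  rewrite Gsym !mxE mulr_suml; apply: eq_bigr => b _ /=.
  by rewrite Gisym; ring.
have n2 : (n + 2)%:R != 0 :> R by rewrite pnatr_eq0 addn2.
move=> E; have -> : dc = (n + 2)%:R * t 0 c / 2 by rewrite natrD; lra.
by field.
Qed.

End Conformal.

Section EigenBrackets.
Variables (R : realType) (n : nat) (U : set 'rV[R]_n) (g T : tfield R n).
Variable t : 'rV[R]_n -> 'rV[R]_n.
Hypotheses (oU : open U) (gU : pseudo_riemannian g U).
Hypotheses (dg : diff_tfield g U) (dT : diff_tfield T U).
Hypothesis Ts : forall q, U q -> (T q)^T = T q.
Hypothesis T_cyclic : forall q, U q -> forall a b c,
  nablaT g T q a b c + nablaT g T q b c a + nablaT g T q c a b
  = g q a b * t q 0 c + g q b c * t q 0 a + g q c a * t q 0 b.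

Lemma nablaT_dir_bform_sym p : U p -> forall u v w,
  bform (nablaT_dir g T u p) v w = bform (nablaT_dir g T u p) w v.
Proof.
by move=> Up u v w; apply: dot_mul_sym; exact: (nablaT_dir_sym g u oU Up Ts).
Qed.

Lemma bform_raise p (s v : 'rV[R]_n) : U p ->
  bform (g p) (s *m (ginv g p)^T) v = dot s v.
Proof.
move=> Up; have [gs gu] := gU Up.
by rewrite bformE -mulmxA (ginv_sym gs) mulVmx // mulmx1.
Qed.

Lemma eigvec_bracket_same rho (x y : vfield R n) :
  diff_fun rho U -> diff_vfield x U -> diff_vfield y U ->
  eigvec g T rho x U -> eigvec g T rho y U -> forall p, U p ->
  let s := drho rho p - t p in
  sbracket g x y p *m (T p - rho p *: g p)
  = bform (g p) (x p) (y p) *: s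
    + bform (g p) (s *m (ginv g p)^T) (x p) *: (y p *m g p)
    + bform (g p) (s *m (ginv g p)^T) (y p) *: (x p *m g p).
Proof.
move=> drho_ dx dy xE yE p Up s; have [gs _] := gU Up.
have Jx := eigvec_jet oU gU Ts dg dT drho_ dx xE Up.
have Jy := eigvec_jet oU gU Ts dg dT drho_ dy yE Up.
apply: dotI => w; rewrite /sbracket !cov_covD addrC.
rewrite (eigen_jet_bracket gs (Ts Up) (nablaT_dir_bform_sym Up)
  (nablaT_dir_cyclic (T_cyclic Up)) w Jx Jy).
by rewrite !bform_raise // !(dotDl, dotNl, dotZl) bformE.
Qed.

Lemma eigvec_bracket_distinct (r1 r2 r3 : 'rV[R]_n -> R) (x y z : vfield R n) :
  diff_fun r1 U -> diff_fun r2 U -> diff_fun r3 U ->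
  diff_vfield x U -> diff_vfield y U -> diff_vfield z U ->
  eigvec g T r1 x U -> eigvec g T r2 y U -> eigvec g T r3 z U ->
  (forall p, U p -> [/\ r1 p != r2 p, r2 p != r3 p & r1 p != r3 p]) ->
  forall p, U p ->
  bform (T p) (x p) (sbracket g y z p) + bform (T p) (z p) (sbracket g x y p)
  + bform (T p) (y p) (sbracket g z x p) = 0.
Proof.
move=> d1 d2 d3 dx dy dz xE yE zE r_neq p Up; have [gs _] := gU Up.
have [r12 r23 r13] := r_neq p Up.
rewrite /sbracket !cov_covD.
exact: (eigen_jet_distinct gs (Ts Up) (nablaT_dir_bform_sym Up)
  (nablaT_dir_cyclic (T_cyclic Up)) r12 r23 r13
  (eigvec_jet oU gU Ts dg dT d1 dx xE Up)
  (eigvec_jet oU gU Ts dg dT d2 dy yE Up)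
  (eigvec_jet oU gU Ts dg dT d3 dz zE Up)).
Qed.

End EigenBrackets.

Lemma killing_tensor_cyclic (R : realType) n (U : set 'rV[R]_n)
    (g T : tfield R n) :
  killing_tensor g T U -> forall q, U q -> forall a b c,
  nablaT g T q a b c + nablaT g T q b c a + nablaT g T q c a b
  = g q a b * (0 : 'rV[R]_n) 0 c + g q b c * (0 : 'rV[R]_n) 0 a
    + g q c a * (0 : 'rV[R]_n) 0 b.
Proof. by move=> kT q Uq a b c; rewrite (kT q Uq).2 !mxE !mulr0 !addr0. Qed.

Lemma conformal_tensor_cyclic (R : realType) n (U : set 'rV[R]_n)
    (g T : tfield R n) :
  open U -> pseudo_riemannian g U -> diff_tfield g U -> diff_tfield T U ->
  conformal_tensor g T U -> forall q, U q -> forall a b c,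
  let t := (2 / (n + 2)%:R) *: divT g T q in
  nablaT g T q a b c + nablaT g T q b c a + nablaT g T q c a b
  = g q a b * t 0 c + g q b c * t 0 a + g q c a * t 0 b.
Proof.
move=> oU gU dg dT [t' Ht'] q Uq a b c t.
have Ts q' : U q' -> (T q')^T = T q' by move=> Uq'; case: (Ht' q' Uq').
have T_traceless q' : U q' -> \sum_a \sum_b ginv g q' a b * T q' a b = 0.
  by move=> Uq'; case: (Ht' q' Uq') => _ [].
have [_ [_ cyc]] := Ht' q Uq.
by rewrite /t -(conformal_oneform oU gU dg dT Ts T_traceless Uq cyc).
Qed.

Unset Implicit Arguments. Set Strict Implicit.

Theorem lemma3 (R : realType) (n : nat) (U : set 'rV[R]_n)
  (g T : 'rV[R]_n -> 'M[R]_n) (conf : bool) :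
  open U -> pseudo_riemannian g U -> diff_tfield g U -> diff_tfield T U ->
  (if conf then conformal_tensor g T U else killing_tensor g T U) ->
  let t : 'rV[R]_n -> 'rV[R]_n :=
    if conf then fun p => (2 / (n + 2)%:R) *: divT g T p else fun _ => 0 in
  (forall (rho : 'rV[R]_n -> R) (x y : 'rV[R]_n -> 'rV[R]_n),
     diff_fun rho U -> diff_vfield x U -> diff_vfield y U ->
     eigvec g T rho x U -> eigvec g T rho y U ->
     forall p, U p ->
       let s := drho rho p - t p in
       sbracket g x y p *m (T p - rho p *: g p)
       = bform (g p) (x p) (y p) *: s
         + bform (g p) (s *m (ginv g p)^T) (x p) *: (y p *m g p)
         + bform (g p) (s *m (ginv g p)^T) (y p) *: (x p *m g p))
  /\
  (forall (r1 r2 r3 : 'rV[R]_n -> R) (x y z : 'rV[R]_n -> 'rV[R]_n),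
     diff_fun r1 U -> diff_fun r2 U -> diff_fun r3 U ->
     diff_vfield x U -> diff_vfield y U -> diff_vfield z U ->
     eigvec g T r1 x U -> eigvec g T r2 y U -> eigvec g T r3 z U ->
     (forall p, U p -> [/\ r1 p != r2 p, r2 p != r3 p & r1 p != r3 p]) ->
     forall p, U p ->
       bform (T p) (x p) (sbracket g y z p)
       + bform (T p) (z p) (sbracket g x y p)
       + bform (T p) (y p) (sbracket g z x p) = 0).
Proof.
move=> oU gU dg dT T_type t.
have Ts : forall q, U q -> (T q)^T = T q.
  case: conf T_type {t} => [[t' Ht'] | kT] q Uq.
    by case: (Ht' q Uq).
  by case: (kT q Uq).
have T_cyclic : forall q, U q -> forall a b c,
    nablaT g T q a b c + nablaT g T q b c a + nablaT g T q c a b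
    = g q a b * t q 0 c + g q b c * t q 0 a + g q c a * t q 0 b.
  rewrite /t; case: conf T_type {t} => T_type.
    exact: conformal_tensor_cyclic.
  exact: killing_tensor_cyclic.
split; first exact: (eigvec_bracket_same oU gU dg dT Ts T_cyclic).
exact: (eigvec_bracket_distinct oU gU dg dT Ts T_cyclic).
Qed.
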